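(* There are ring homomorphisms $$\mathrm{B}(\mathcal{Q})\longrightarrow\mathrm{B}(\mathcal{R})\longrightarrow\mathrm{B}(\mathcal{Q})$$ whose composition is the identity of $\mathrm{B}(\mathcal{Q})$.
   Context: A rack is a set $R$ with a binary operation $\rhd$ such that every left multiplication $\ell_a\colon b\mapsto a\rhd b$ is a bijection and $a\rhd(b\rhd c)=(a\rhd b)\rhd(a\rhd c)$ for all $a,b,c$; a quandle is a rack with $a\rhd a=a$ for all $a$. A subrack is a subset $S$ with $\ell_s(S)=S$ for all $s\in S$; a decomposition of $R$ into $S$ and $T$ means $S,T$ are disjoint subracks (possibly empty) with $S\cup T=R$. The Burnside ring of finite racks $\mathrm{B}(\mathcal{R})$ is the abelian group generated by symbols $b(R)$, one for each finite rack $R$, subject to $b(R_1)=b(R_2)$ whenever $R_1\cong R_2$ and $b(R)=b(S)+b(T)$ whenever $R$ decomposes into $S$ and $T$, with ring structure $b(R)b(R')=b(R\times R')$ (cartesian product, componentwise operation) and unit the class of the singleton. The Burnside ring of finite quandles $\mathrm{B}(\mathcal{Q})$ is defined in the same way using only finite quandles. *)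

From mathcomp Require Import all_boot all_order.
Set Implicit Arguments. Unset Strict Implicit. Unset Printing Implicit Defensive.

(** Every finite rack is isomorphic to one whose carrier is ['I_n]; since the
    Burnside ring identifies isomorphic racks, we take as generators the
    finite racks with carrier ['I_n] (n : nat, n = 0 allowed = empty rack). *)

Record frack := FRack {
  rn : nat;
  rop : 'I_rn -> 'I_rn -> 'I_rn;           (* a |> b = rop a b *)
  rack_bij : forall a, bijective (rop a);
  rack_dist : forall a b c, rop a (rop b c) = rop (rop a b) (rop a c)
}.

Record fquandle := FQuandle {
  qr :> frack;
  q_idem : forall a, @rop qr a a = a
}.

Definition rack_iso (R S : frack) : Prop :=
  exists f : 'I_(rn R) -> 'I_(rn S),
    bijective f /\ forall a b, f (rop a b) = rop (f a) (f b).

Definition rack_decomp (R S T : frack) : Prop :=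
  exists (i : 'I_(rn S) -> 'I_(rn R)) (j : 'I_(rn T) -> 'I_(rn R)),
    [/\ injective i, injective j,
        (forall a b, i (rop a b) = rop (i a) (i b)),
        (forall a b, j (rop a b) = rop (j a) (j b)) &
        (forall x, ((exists a, i a = x) /\ ~ (exists b, j b = x)) \/
                   (~ (exists a, i a = x) /\ (exists b, j b = x)))].

Lemma pt_bij (a : 'I_1) : bijective (fun b : 'I_1 => b).
Proof. by exists id. Qed.
Lemma pt_dist (a b c : 'I_1) : c = c. Proof. by []. Qed.
Definition rack_pt : frack := @FRack 1 (fun _ b => b) pt_bij (fun _ _ _ => erefl).
Definition quandle_pt : fquandle :=
  @FQuandle rack_pt (fun a => erefl).

Section Prod.
Variables R S : frack.
Let P := ('I_(rn R) * 'I_(rn S))%type.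
Definition pop (x y : P) : P := (rop x.1 y.1, rop x.2 y.2).
Definition prod_op (i j : 'I_#|{: P}|) : 'I_#|{: P}| :=
  enum_rank (pop (enum_val i) (enum_val j)).

Lemma prod_bij a : bijective (prod_op a).
Proof.
have [g1 g1K Kg1] := rack_bij (enum_val a).1.
have [g2 g2K Kg2] := rack_bij (enum_val a).2.
pose h (i : 'I_#|{: P}|) : 'I_#|{: P}| :=
  enum_rank (g1 (enum_val i).1, g2 (enum_val i).2).
exists h => i; rewrite /h /prod_op /pop enum_rankK.
- cbn [fst snd]; rewrite g1K g2K -surjective_pairing; exact: enum_valK.
- cbn [fst snd]; rewrite Kg1 Kg2 -surjective_pairing; exact: enum_valK.
Qed.

Lemma prod_dist a b c :
  prod_op a (prod_op b c) = prod_op (prod_op a b) (prod_op a c).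
Proof.
rewrite /prod_op /pop !enum_rankK; cbn [fst snd].
by rewrite (rack_dist (enum_val a).1) (rack_dist (enum_val a).2).
Qed.

Definition rack_prod : frack := @FRack _ prod_op prod_bij prod_dist.
End Prod.

Lemma quandle_prod_idem (Q1 Q2 : fquandle) a :
  @rop (rack_prod Q1 Q2) a a = a.
Proof.
rewrite /rack_prod /rop /prod_op /pop; cbn [fst snd].
by rewrite !q_idem -surjective_pairing enum_valK.
Qed.
Definition quandle_prod (Q1 Q2 : fquandle) : fquandle :=
  @FQuandle (rack_prod Q1 Q2) (@quandle_prod_idem Q1 Q2).

(** Elements: formal Z-linear combinations of generators (terms), modulo the
    congruence generated by the abelian group laws, b(R1)=b(R2) for R1 ~= R2,
    and b(R)=b(S)+b(T) for decompositions. *)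
Section Burnside.
Variable G : Type.
Variable car : G -> frack.
Variable gmul : G -> G -> G.       (* cartesian product *)

Inductive bterm : Type :=
| bGen of G
| bZero
| bAdd of bterm & bterm
| bNeg of bterm.

Inductive beq : bterm -> bterm -> Prop :=
| beq_refl x : beq x x
| beq_sym x y : beq x y -> beq y x
| beq_trans x y z : beq x y -> beq y z -> beq x z
| beq_add x x' y y' : beq x x' -> beq y y' -> beq (bAdd x y) (bAdd x' y')
| beq_neg x x' : beq x x' -> beq (bNeg x) (bNeg x')
| beq_addA x y z : beq (bAdd x (bAdd y z)) (bAdd (bAdd x y) z)
| beq_addC x y : beq (bAdd x y) (bAdd y x)
| beq_add0 x : beq (bAdd bZero x) x
| beq_addN x : beq (bAdd (bNeg x) x) bZero
| beq_iso r s : rack_iso (car r) (car s) -> beq (bGen r) (bGen s)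
| beq_decomp r s t : rack_decomp (car r) (car s) (car t) ->
    beq (bGen r) (bAdd (bGen s) (bGen t)).

Fixpoint bmul (x y : bterm) : bterm :=
  match x with
  | bGen g =>
      (fix bmulg (y : bterm) : bterm :=
         match y with
         | bGen h => bGen (gmul g h)
         | bZero => bZero
         | bAdd y1 y2 => bAdd (bmulg y1) (bmulg y2)
         | bNeg y1 => bNeg (bmulg y1)
         end) y
  | bZero => bZero
  | bAdd x1 x2 => bAdd (bmul x1 y) (bmul x2 y)
  | bNeg x1 => bNeg (bmul x1 y)
  end.
End Burnside.

Definition BR := bterm frack.
Definition BR_eq : BR -> BR -> Prop := beq (fun r : frack => r).
Definition BR_add : BR -> BR -> BR := @bAdd frack.
Definition BR_mul : BR -> BR -> BR := bmul rack_prod.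
Definition BR_one : BR := bGen rack_pt.

Definition BQ := bterm fquandle.
Definition BQ_eq : BQ -> BQ -> Prop := beq (fun q : fquandle => qr q).
Definition BQ_add : BQ -> BQ -> BQ := @bAdd fquandle.
Definition BQ_mul : BQ -> BQ -> BQ := bmul quandle_prod.
Definition BQ_one : BQ := bGen quandle_pt.

Definition ring_hom_on (A B : Type) (eqA : A -> A -> Prop) (eqB : B -> B -> Prop)
  (addA : A -> A -> A) (addB : B -> B -> B) (mulA : A -> A -> A) (mulB : B -> B -> B)
  (oneA : A) (oneB : B) (f : A -> B) : Prop :=
  [/\ (forall x y, eqA x y -> eqB (f x) (f y)),
      (forall x y, eqB (f (addA x y)) (addB (f x) (f y))),
      (forall x y, eqB (f (mulA x y)) (mulB (f x) (f y))) &
      eqB (f oneA) oneB].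

From mathcomp Require Import all_boot all_order.
Set Implicit Arguments. Unset Strict Implicit. Unset Printing Implicit Defensive.

(* The inclusion of quandles into racks induces B(Q) -> B(R).  In the other
   direction take the fixed points Fix(R) = {a | a |> a = a}: it is a quandle,
   stable under every left multiplication since a |> (b |> b) = (a |> b) |> (a |> b).
   Fix commutes with isomorphisms, decompositions (a point of a subrack is fixed
   there iff it is fixed in R), cartesian products and the one-point rack, so it
   induces a ring homomorphism B(R) -> B(Q); and Fix(Q) = Q for a quandle Q. *)

Definition rack_morph (R S : frack) (f : 'I_(rn R) -> 'I_(rn S)) : Prop :=
  forall a b, f (rop a b) = rop (f a) (f b).

Lemma rack_iso_refl (R : frack) : rack_iso R R.
Proof. by exists id; split=> //; exists id. Qed.

Lemma rack_iso_of_same_image (A B R : frack)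
    (i : 'I_(rn A) -> 'I_(rn R)) (j : 'I_(rn B) -> 'I_(rn R)) :
  injective i -> injective j -> rack_morph i -> rack_morph j ->
  (forall x, (exists a, i a = x) <-> (exists b, j b = x)) ->
  rack_iso A B.
Proof.
move=> i_inj j_inj i_morph j_morph same_image.
have ex_j a : exists b, j b == i a.
  by have [b <-] := proj1 (same_image (i a)) (ex_intro _ a erefl); exists b.
have ex_i b : exists a, i a == j b.
  by have [a <-] := proj2 (same_image (j b)) (ex_intro _ b erefl); exists a.
pose psi a := xchoose (ex_j a); pose chi b := xchoose (ex_i b).
have psiE a : j (psi a) = i a by apply/eqP; exact: (xchooseP (ex_j a)).
have chiE b : i (chi b) = j b by apply/eqP; exact: (xchooseP (ex_i b)).
exists psi; split.
- by exists chi => [a|b]; [apply: i_inj; rewrite chiE | apply: j_inj; rewrite psiE].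
- by move=> a b; apply: j_inj; rewrite j_morph !psiE i_morph.
Qed.

Section Subrack.
Variables (R : frack) (P : pred 'I_(rn R)).
Hypothesis P_stable : forall a b, P b -> P (rop a b).

Let T := {a : 'I_(rn R) | P a}.

Definition subrack_in (x : 'I_(rn R)) (Px : P x) : 'I_#|{: T}| :=
  enum_rank (exist _ x Px : T).

Definition subrack_val (k : 'I_#|{: T}|) : 'I_(rn R) := val (enum_val k).

Definition subrack_op (k l : 'I_#|{: T}|) : 'I_#|{: T}| :=
  subrack_in (P_stable (subrack_val k) (valP (enum_val l))).

Lemma subrack_val_in x (Px : P x) : subrack_val (subrack_in Px) = x.
Proof. by rewrite /subrack_val enum_rankK. Qed.

Lemma subrack_val_inj : injective subrack_val.
Proof. by move=> k l /val_inj /enum_val_inj. Qed.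

Lemma subrack_val_op k l :
  subrack_val (subrack_op k l) = rop (subrack_val k) (subrack_val l).
Proof. exact: subrack_val_in. Qed.

Lemma subrack_op_bij k : bijective (subrack_op k).
Proof.
apply: injF_bij => l l' /(congr1 subrack_val); rewrite !subrack_val_op.
by move/(bij_inj (rack_bij _))/subrack_val_inj.
Qed.

Lemma subrack_op_dist k l m :
  subrack_op k (subrack_op l m) = subrack_op (subrack_op k l) (subrack_op k m).
Proof. by apply: subrack_val_inj; rewrite !subrack_val_op rack_dist. Qed.

Definition subrack : frack := FRack subrack_op_bij subrack_op_dist.

Lemma subrack_val_morph : rack_morph (subrack_val : 'I_(rn subrack) -> _).
Proof. exact: subrack_val_op. Qed.

Lemma subrack_valP x : reflect (exists k, subrack_val k = x) (P x).
Proof.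
apply: (iffP idP) => [Px | [k <-]]; last exact: valP.
by exists (subrack_in Px); rewrite subrack_val_in.
Qed.

End Subrack.

Definition is_fixed (R : frack) (a : 'I_(rn R)) : bool := rop a a == a.

Lemma is_fixed_rop (R : frack) (a b : 'I_(rn R)) :
  is_fixed b -> is_fixed (rop a b).
Proof. by rewrite /is_fixed -rack_dist => /eqP ->. Qed.

Lemma rack_morph_fixed (R S : frack) (f : 'I_(rn R) -> 'I_(rn S)) a :
  rack_morph f -> is_fixed a -> is_fixed (f a).
Proof. by move=> f_morph; rewrite /is_fixed -f_morph => /eqP ->. Qed.

Lemma rack_morph_fixedE (R S : frack) (f : 'I_(rn R) -> 'I_(rn S)) a :
  rack_morph f -> injective f -> is_fixed (f a) = is_fixed a.
Proof. by move=> f_morph f_inj; rewrite /is_fixed -f_morph (inj_eq f_inj). Qed.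

Section FixedPoints.
Variable R : frack.

Definition fix_rack : frack := subrack (@is_fixed_rop R).

Definition fix_val : 'I_(rn fix_rack) -> 'I_(rn R) := @subrack_val R (@is_fixed R).

Definition fix_in x (fx : is_fixed x) : 'I_(rn fix_rack) :=
  @subrack_in R (@is_fixed R) x fx.

Lemma fix_val_in x (fx : is_fixed x) : fix_val (fix_in fx) = x.
Proof. exact: subrack_val_in. Qed.

Lemma fix_val_inj : injective fix_val.
Proof. exact: subrack_val_inj. Qed.

Lemma fix_val_morph : rack_morph fix_val.
Proof. exact: subrack_val_morph. Qed.

Lemma fix_valP x : reflect (exists k, fix_val k = x) (is_fixed x).
Proof. exact: subrack_valP. Qed.

Lemma fix_val_fixed k : is_fixed (fix_val k).
Proof. by apply/fix_valP; exists k. Qed.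

Lemma fix_rack_idem k : rop k k = k :> 'I_(rn fix_rack).
Proof. by apply: fix_val_inj; rewrite fix_val_morph; apply/eqP/fix_val_fixed. Qed.

Definition fix_quandle : fquandle := FQuandle fix_rack_idem.

End FixedPoints.

Section FixMap.
Variables (S R : frack) (f : 'I_(rn S) -> 'I_(rn R)).
Hypothesis f_morph : rack_morph f.

Definition fix_map (k : 'I_(rn (fix_rack S))) : 'I_(rn (fix_rack R)) :=
  fix_in (rack_morph_fixed f_morph (fix_val_fixed k)).

Lemma fix_val_map k : fix_val (fix_map k) = f (fix_val k).
Proof. exact: fix_val_in. Qed.

Lemma fix_map_morph : rack_morph fix_map.
Proof. by move=> k l; apply: fix_val_inj; rewrite !(fix_val_morph, fix_val_map) f_morph. Qed.

Hypothesis f_inj : injective f.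

Lemma fix_map_inj : injective fix_map.
Proof. by move=> k l /(congr1 (@fix_val R)); rewrite !fix_val_map => /f_inj/fix_val_inj. Qed.

Lemma fix_map_image x :
  (exists k, fix_map k = x) <-> (exists a, f a = fix_val x).
Proof.
split=> [[k <-] | [a fa]]; first by exists (fix_val k); rewrite fix_val_map.
have /fix_valP[k ka] : is_fixed a.
  by rewrite -(rack_morph_fixedE a f_morph f_inj) fa fix_val_fixed.
by exists k; apply: fix_val_inj; rewrite fix_val_map ka.
Qed.

End FixMap.

Lemma fix_iso (R S : frack) : rack_iso R S -> rack_iso (fix_rack R) (fix_rack S).
Proof.
case=> phi [phi_bij phi_morph]; have phi_inj := bij_inj phi_bij.
have [psi phiK psiK] := phi_bij.
apply: (rack_iso_of_same_image (i := phi \o @fix_val R) (j := @fix_val S)).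
- by move=> k l /phi_inj/fix_val_inj.
- exact: fix_val_inj.
- by move=> k l /=; rewrite fix_val_morph phi_morph.
- exact: fix_val_morph.
move=> y; split=> [[k <-] | [l <-]].
  by apply/fix_valP; apply: rack_morph_fixed (fix_val_fixed k).
have : is_fixed (psi (fix_val l)).
  by rewrite -(rack_morph_fixedE _ phi_morph phi_inj) psiK fix_val_fixed.
by case/fix_valP=> k kE; exists k; rewrite /= kE psiK.
Qed.

Lemma fix_decomp (R S T : frack) :
  rack_decomp R S T -> rack_decomp (fix_rack R) (fix_rack S) (fix_rack T).
Proof.
case=> i [j [i_inj j_inj i_morph j_morph cover]].
exists (fix_map i_morph), (fix_map j_morph); split.
- exact: fix_map_inj.
- exact: fix_map_inj.
- exact: fix_map_morph.
- exact: fix_map_morph.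
move=> x; have := cover (fix_val x).
have := fix_map_image i_morph i_inj x; have := fix_map_image j_morph j_inj x.
tauto.
Qed.

Lemma fix_quandle_iso (Q : fquandle) : rack_iso (fix_rack Q) Q.
Proof.
apply: (rack_iso_of_same_image (i := @fix_val Q) (j := id)) => //.
- exact: fix_val_inj.
- exact: fix_val_morph.
move=> x; split=> [[k _] | _]; first by exists x.
by apply/fix_valP; rewrite /is_fixed q_idem.
Qed.

Section ProdMap.
Variables (R1 R2 S1 S2 : frack).
Variables (f1 : 'I_(rn R1) -> 'I_(rn S1)) (f2 : 'I_(rn R2) -> 'I_(rn S2)).

Definition prod_map (k : 'I_(rn (rack_prod R1 R2))) : 'I_(rn (rack_prod S1 S2)) :=
  enum_rank (f1 (enum_val k).1, f2 (enum_val k).2).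

Lemma prod_map_morph : rack_morph f1 -> rack_morph f2 -> rack_morph prod_map.
Proof. by move=> m1 m2 k l; rewrite /prod_map /= /prod_op /pop !enum_rankK /= m1 m2. Qed.

Lemma prod_map_inj : injective f1 -> injective f2 -> injective prod_map.
Proof.
move=> i1 i2 k l /enum_rank_inj [/i1 e1 /i2 e2]; apply: enum_val_inj.
by rewrite [enum_val k]surjective_pairing [enum_val l]surjective_pairing e1 e2.
Qed.

End ProdMap.

Lemma is_fixed_prod (R S : frack) (k : 'I_(rn (rack_prod R S))) :
  is_fixed k = is_fixed (enum_val k).1 && is_fixed (enum_val k).2.
Proof.
rewrite /is_fixed /= /prod_op /pop -[X in _ == X](enum_valK k) (inj_eq enum_rank_inj).
by case: (enum_val k).
Qed.

Lemma fix_prod (R S : frack) :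
  rack_iso (fix_rack (rack_prod R S)) (quandle_prod (fix_quandle R) (fix_quandle S)).
Proof.
apply: (rack_iso_of_same_image (i := @fix_val _)
          (j := prod_map (@fix_val R) (@fix_val S))).
- exact: fix_val_inj.
- exact/prod_map_inj/fix_val_inj/fix_val_inj.
- exact: fix_val_morph.
- exact/prod_map_morph/fix_val_morph/fix_val_morph.
move=> x; split=> [[k <-] | [l <-]].
  have := fix_val_fixed k; rewrite is_fixed_prod => /andP[/fix_valP[a aE] /fix_valP[b bE]].
  exists (enum_rank ((a, b) : 'I_(rn (fix_rack R)) * 'I_(rn (fix_rack S)))).
  by rewrite /prod_map enum_rankK /= aE bE -surjective_pairing enum_valK.
apply/fix_valP; rewrite is_fixed_prod /prod_map enum_rankK /=.
by rewrite !fix_val_fixed.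
Qed.

Fixpoint bterm_map (G G' : Type) (h : G -> G') (x : bterm G) : bterm G' :=
  match x with
  | bGen g => bGen (h g)
  | bZero => bZero G'
  | bAdd x1 x2 => bAdd (bterm_map h x1) (bterm_map h x2)
  | bNeg x1 => bNeg (bterm_map h x1)
  end.

Section BtermMap.
Variables (G G' : Type) (car : G -> frack) (car' : G' -> frack) (h : G -> G').

Lemma beq_bterm_map :
  (forall r s, rack_iso (car r) (car s) -> rack_iso (car' (h r)) (car' (h s))) ->
  (forall r s t, rack_decomp (car r) (car s) (car t) ->
     rack_decomp (car' (h r)) (car' (h s)) (car' (h t))) ->
  forall x y, beq car x y -> beq car' (bterm_map h x) (bterm_map h y).
Proof. by move=> h_iso h_decomp x y; elim=> /=; econstructor; eauto. Qed.

Lemma bterm_map_mul (gmul : G -> G -> G) (gmul' : G' -> G' -> G') :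
  (forall a b, rack_iso (car' (h (gmul a b))) (car' (gmul' (h a) (h b)))) ->
  forall x y,
    beq car' (bterm_map h (bmul gmul x y)) (bmul gmul' (bterm_map h x) (bterm_map h y)).
Proof.
move=> h_mul; elim=> [a||x1 IH1 x2 IH2|x1 IH1] y /=; try by constructor.
elim: y => [b||y1 IHy1 y2 IHy2|y1 IHy1] /=; by constructor.
Qed.

Lemma bterm_map_ring_hom (gmul : G -> G -> G) (gmul' : G' -> G' -> G') (one : G) (one' : G') :
  (forall r s, rack_iso (car r) (car s) -> rack_iso (car' (h r)) (car' (h s))) ->
  (forall r s t, rack_decomp (car r) (car s) (car t) ->
     rack_decomp (car' (h r)) (car' (h s)) (car' (h t))) ->
  (forall a b, rack_iso (car' (h (gmul a b))) (car' (gmul' (h a) (h b)))) ->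
  rack_iso (car' (h one)) (car' one') ->
  ring_hom_on (beq car) (beq car') (@bAdd G) (@bAdd G') (bmul gmul) (bmul gmul')
    (bGen one) (bGen one') (bterm_map h).
Proof.
move=> h_iso h_decomp h_mul h_one; split.
- exact: beq_bterm_map.
- by move=> x y; apply: beq_refl.
- exact: bterm_map_mul.
- exact: beq_iso.
Qed.

End BtermMap.

Lemma beq_bterm_map_cancel (G G' : Type) (car : G -> frack) (h : G -> G') (k : G' -> G) :
  (forall g, rack_iso (car (k (h g))) (car g)) ->
  forall x, beq car (bterm_map k (bterm_map h x)) x.
Proof. by move=> hk_iso; elim=> /=; constructor. Qed.

Theorem proposition3p18 :
  exists (f : BQ -> BR) (g : BR -> BQ),
    [/\ ring_hom_on BQ_eq BR_eq BQ_add BR_add BQ_mul BR_mul BQ_one BR_one f,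
        ring_hom_on BR_eq BQ_eq BR_add BQ_add BR_mul BQ_mul BR_one BQ_one g &
        forall x : BQ, BQ_eq (g (f x)) x].
Proof.
exists (bterm_map (fun Q : fquandle => qr Q)), (bterm_map fix_quandle); split.
- by apply: bterm_map_ring_hom => // *; apply: rack_iso_refl.
- apply: bterm_map_ring_hom.
  + exact: fix_iso.
  + exact: fix_decomp.
  + exact: fix_prod.
  + exact: fix_quandle_iso quandle_pt.
- by apply: beq_bterm_map_cancel => Q; apply: fix_quandle_iso.
Qed.
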